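(* Let $\Lambda$ be a level-sentence set for a language $\mathcal L$. Let $A$ be a set of first-order $\mathcal L$-sentences and $\phi$ an $\mathcal L$-sentence such that $A\not\vdash\phi\leftrightarrow\psi$ for every $\psi\in\neg\Lambda$. Then there are complete consistent theories $T^+\supseteq A\cup\{\phi\}$ and $T^-\supseteq A\cup\{\neg\phi\}$ such that $\Lambda\cap T^-\subseteq\Lambda\cap T^+$. Furthermore, if $T$ is any theory consistent with $A\cup\{\phi\}\cup\mathrm{Th}_\Lambda(A\cup\{\neg\phi\})$, then $T^+$ can be chosen to contain $T$.
   Context: A level-sentence set for $\mathcal L$ is either the set of all $\exists_n$-sentences or the set of all $\forall_n$-sentences of $\mathcal L$, for some $n$ (prenex sentences with $n$ alternating quantifier blocks starting with $\exists$, resp. $\forall$). For a level-sentence set $\Lambda$, $\neg\Lambda$ is the set of sentences logically equivalent to the negation of a sentence in $\Lambda$. For a theory $T$, $\mathrm{Th}_\Lambda(T)=\Lambda\cap\overline T$, where $\overline T$ is the deductive closure of $T$. Complete theories are taken deductively closed. *)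

From Stdlib Require Import Arith Fin.
Set Implicit Arguments.

(* A first-order language: function and relation symbols with arities
   (constants are 0-ary function symbols). *)
Record language : Type := {
  funs : Type;
  rels : Type;
  fun_ar : funs -> nat;
  rel_ar : rels -> nat }.

Section Syntax.
Variable L : language.

Inductive term : Type :=
| var : nat -> term
| func : forall f : funs L, (Fin.t (fun_ar L f) -> term) -> term.

Inductive form : Type :=
| fbot : form
| feq : term -> term -> form
| frel : forall R : rels L, (Fin.t (rel_ar L R) -> term) -> form
| fneg : form -> form
| fand : form -> form -> form
| for_ : form -> form -> form
| fimp : form -> form -> form
| fall : form -> form   (* binds de Bruijn index 0 *)
| fex : form -> form.

Definition fiff (p q : form) : form := fand (fimp p q) (fimp q p).

Fixpoint bound_t (n : nat) (t : term) : Prop :=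
  match t with
  | var k => k < n
  | func f v => forall i, bound_t n (v i)
  end.

Fixpoint bound_f (n : nat) (p : form) : Prop :=
  match p with
  | fbot => True
  | feq t u => bound_t n t /\ bound_t n u
  | frel R v => forall i, bound_t n (v i)
  | fneg q => bound_f n q
  | fand q r | for_ q r | fimp q r => bound_f n q /\ bound_f n r
  | fall q | fex q => bound_f (S n) q
  end.

Definition sentence (p : form) : Prop := bound_f 0 p.

Fixpoint qfree (p : form) : Prop :=
  match p with
  | fbot | feq _ _ | frel _ _ => True
  | fneg q => qfree q
  | fand q r | for_ q r | fimp q r => qfree q /\ qfree r
  | fall _ | fex _ => False
  end.

(* Prenex classes: isEx n p  <-> p is prenex with n alternating quantifier
   blocks starting with an existential block (blocks may be empty);
   isAll n p dually. Level 0 = quantifier-free. *)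
Inductive isEx : nat -> form -> Prop :=
| isEx0 p : qfree p -> isEx 0 p
| isEx_lift n p : isAll n p -> isEx (S n) p
| isEx_q n p : isEx (S n) p -> isEx (S n) (fex p)
with isAll : nat -> form -> Prop :=
| isAll0 p : qfree p -> isAll 0 p
| isAll_lift n p : isEx n p -> isAll (S n) p
| isAll_q n p : isAll (S n) p -> isAll (S n) (fall p).

End Syntax.

Arguments var {L}.
Arguments fbot {L}.

Record structure (L : language) : Type := {
  dom : Type;
  dom_inh : inhabited dom;
  interp_f : forall f : funs L, (Fin.t (fun_ar L f) -> dom) -> dom;
  interp_r : forall R : rels L, (Fin.t (rel_ar L R) -> dom) -> Prop }.

Definition scons {D : Type} (d : D) (rho : nat -> D) : nat -> D :=
  fun k => match k with 0 => d | S k => rho k end.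

Fixpoint eval_t {L} (M : structure L) (rho : nat -> dom M) (t : term L)
  : dom M :=
  match t with
  | var k => rho k
  | func f v => interp_f M f (fun i => eval_t M rho (v i))
  end.

Fixpoint holds {L} (M : structure L) (rho : nat -> dom M) (p : form L)
  : Prop :=
  match p with
  | fbot => False
  | feq t u => eval_t M rho t = eval_t M rho u
  | frel R v => interp_r M R (fun i => eval_t M rho (v i))
  | fneg q => ~ holds M rho q
  | fand q r => holds M rho q /\ holds M rho r
  | for_ q r => holds M rho q \/ holds M rho r
  | fimp q r => holds M rho q -> holds M rho r
  | fall q => forall d, holds M (scons d rho) q
  | fex q => exists d, holds M (scons d rho) q
  end.

(* M |= p (for sentences the environment is irrelevant) *)
Definition models {L} (M : structure L) (p : form L) : Prop :=
  forall rho, holds M rho p.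

Definition fset (L : language) := form L -> Prop.

Definition is_theory {L} (T : fset L) : Prop := forall p, T p -> sentence p.

Definition models_set {L} (M : structure L) (T : fset L) : Prop :=
  forall p, T p -> models M p.

(* T |- p, read via the completeness theorem as semantic consequence *)
Definition entails {L} (T : fset L) (p : form L) : Prop :=
  forall M : structure L, models_set M T -> models M p.

Definition consistent {L} (T : fset L) : Prop :=
  exists M : structure L, models_set M T.

Definition closure {L} (T : fset L) : fset L :=
  fun p => sentence p /\ entails T p.

Definition deductively_closed {L} (T : fset L) : Prop :=
  forall p, sentence p -> entails T p -> T p.

Definition complete {L} (T : fset L) : Prop :=
  forall p, sentence p -> entails T p \/ entails T (fneg p).

Definition complete_consistent_theory {L} (T : fset L) : Prop :=
  is_theory T /\ deductively_closed T /\ complete T /\ consistent T.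

Definition fsubset {L} (A B : fset L) : Prop := forall p, A p -> B p.
Definition funion {L} (A B : fset L) : fset L := fun p => A p \/ B p.
Definition fsingle {L} (q : form L) : fset L := fun p => p = q.
Definition finter {L} (A B : fset L) : fset L := fun p => A p /\ B p.

(* Level-sentence sets: all exists_n sentences or all forall_n sentences *)
Inductive qkind := KEx | KAll.

Definition level_set {L} (k : qkind) (n : nat) : fset L :=
  fun p => sentence p /\
    match k with KEx => isEx n p | KAll => isAll n p end.

Definition neg_set {L} (Lam : fset L) : fset L :=
  fun q => sentence q /\
    exists p, Lam p /\ entails (fun _ => False) (fiff q (fneg p)).

Definition Th {L} (Lam T : fset L) : fset L := finter Lam (closure T).

(* Compactness (via ultraproducts and Łoś's theorem) reduces everything to
   finitely many level sentences, and a level-sentence set is closed, up to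
   logical equivalence, under finite conjunctions and disjunctions (prenex
   operations).

   If M is a model of A, phi and Th_Lambda(A, ~phi), then A, ~phi together
   with the negations of all Lambda-sentences false in M are consistent:
   otherwise A, ~phi would prove a finite disjunction of such sentences,
   which is again in Lambda, hence in Th_Lambda(A, ~phi) and true in M.  A
   model N of this set has its Lambda-theory inside that of M, so
   T+ = Th(M) and T- = Th(N) work.  Such an M exists: otherwise A, phi refute
   a finite conjunction sigma in Lambda with A, ~phi |- sigma, so that
   A |- phi <-> ~sigma, against the hypothesis since ~sigma is in ~Lambda. *)

From Stdlib Require Import Lia List Classical ClassicalEpsilon
  FunctionalExtensionality PropExtensionality ProofIrrelevance.
From mathcomp Require filter.

Lemma map_preimage {X Y} (f : X -> Y) (P : X -> Prop) (l : list Y) :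
  (forall y, In y l -> exists x, P x /\ y = f x) ->
  exists xs, (forall x, In x xs -> P x) /\ l = map f xs.
Proof.
  induction l as [|y l IH]; intro Hl; [exists nil; simpl; tauto|].
  destruct (Hl y (or_introl eq_refl)) as [x [Px ->]].
  destruct IH as [xs [Hxs ->]]; [intros; apply Hl; right; assumption|].
  exists (x :: xs); split; [intros z [<- | Hz]; auto | reflexivity].
Qed.

Lemma list_union_cover {X} (P Q : X -> Prop) (l : list X) :
  (forall x, In x l -> P x \/ Q x) ->
  exists lq, (forall x, In x lq -> Q x) /\ forall x, In x l -> P x \/ In x lq.
Proof.
  induction l as [|y l IH]; intro Hl; [exists nil; simpl; tauto|].
  destruct IH as [lq [Hlq Hcov]]; [intros; apply Hl; right; assumption|].
  destruct (Hl y (or_introl eq_refl)) as [Py | Qy].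
  - exists lq; split; [assumption|]; intros x [<- | Hx]; auto.
  - exists (y :: lq); split; [intros x [<- | Hx]; auto|].
    intros x [<- | Hx]; [right; left; reflexivity|].
    destruct (Hcov x Hx); [left | right; right]; assumption.
Qed.

Section FirstOrder.
Variable L : language.

Definition up (xi : nat -> nat) : nat -> nat :=
  fun k => match k with 0 => 0 | S k => S (xi k) end.

Fixpoint ren_t (xi : nat -> nat) (t : term L) : term L :=
  match t with
  | var k => var (xi k)
  | func f v => func f (fun i => ren_t xi (v i))
  end.

Fixpoint ren_f (xi : nat -> nat) (p : form L) : form L :=
  match p with
  | fbot => fbot
  | feq t u => feq (ren_t xi t) (ren_t xi u)
  | frel R v => frel R (fun i => ren_t xi (v i))
  | fneg q => fneg (ren_f xi q)
  | fand q r => fand (ren_f xi q) (ren_f xi r)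
  | for_ q r => for_ (ren_f xi q) (ren_f xi r)
  | fimp q r => fimp (ren_f xi q) (ren_f xi r)
  | fall q => fall (ren_f (up xi) q)
  | fex q => fex (ren_f (up xi) q)
  end.

Lemma eval_ren (M : structure L) rho xi t :
  eval_t M rho (ren_t xi t) = eval_t M (fun k => rho (xi k)) t.
Proof.
  induction t as [k | f v IH]; simpl; [reflexivity |].
  f_equal; apply functional_extensionality; auto.
Qed.

Lemma scons_up (M : structure L) (d : dom M) rho xi :
  (fun k => scons d rho (up xi k)) = scons d (fun k => rho (xi k)).
Proof. apply functional_extensionality; intros [|k]; reflexivity. Qed.

Lemma holds_ren (M : structure L) p : forall xi rho,
  holds M rho (ren_f xi p) <-> holds M (fun k => rho (xi k)) p.
Proof.
  induction p; intros xi rho; simpl;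
    rewrite ?eval_ren, ?IHp, ?IHp1, ?IHp2; try reflexivity.
  - rewrite (functional_extensionality _ _ (fun i => eval_ren M rho xi (t i))).
    reflexivity.
  - setoid_rewrite IHp; setoid_rewrite scons_up; reflexivity.
  - setoid_rewrite IHp; setoid_rewrite scons_up; reflexivity.
Qed.

Lemma holds_shift (M : structure L) p d rho :
  holds M (scons d rho) (ren_f S p) <-> holds M rho p.
Proof. rewrite holds_ren; reflexivity. Qed.

Lemma bound_ren_t t : forall m m' xi, (forall k, k < m -> xi k < m') ->
  bound_t m t -> bound_t m' (ren_t xi t).
Proof. induction t as [k | f v IH]; simpl; eauto. Qed.

Lemma bound_ren p : forall m m' xi, (forall k, k < m -> xi k < m') ->
  bound_f m p -> bound_f m' (ren_f xi p).
Proof.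
  induction p; simpl; intros m m' xi Hxi Hp;
    try solve [intuition eauto using bound_ren_t].
  all: apply (IHp (S m)); auto; intros [|k] Hk; simpl; [lia | specialize (Hxi k); lia].
Qed.

Lemma qfree_ren p xi : qfree p -> qfree (ren_f xi p).
Proof. revert xi; induction p; simpl; intuition. Qed.

Lemma eval_coincide (M : structure L) n rho rho' t : bound_t n t ->
  (forall k, k < n -> rho k = rho' k) -> eval_t M rho t = eval_t M rho' t.
Proof.
  intros Ht Hrho; induction t as [k | f v IH]; simpl in *; auto.
  f_equal; apply functional_extensionality; auto.
Qed.

Lemma holds_coincide (M : structure L) p : forall n rho rho', bound_f n p ->
  (forall k, k < n -> rho k = rho' k) -> (holds M rho p <-> holds M rho' p).
Proof.
  induction p; intros n rho rho' Hp Hrho; simpl in *.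
  - reflexivity.
  - destruct Hp; erewrite !(eval_coincide M n rho rho'); eauto; reflexivity.
  - rewrite (functional_extensionality _ _
      (fun i => eval_coincide M n rho rho' (t i) (Hp i) Hrho)).
    reflexivity.
  - rewrite (IHp n rho rho'); tauto.
  - destruct Hp; rewrite (IHp1 n rho rho'), (IHp2 n rho rho'); tauto.
  - destruct Hp; rewrite (IHp1 n rho rho'), (IHp2 n rho rho'); tauto.
  - destruct Hp; rewrite (IHp1 n rho rho'), (IHp2 n rho rho'); tauto.
  - assert (Hd : forall d k, k < S n -> scons d rho k = scons d rho' k)
      by (intros d [|k] Hk; simpl; auto with arith).
    setoid_rewrite (IHp (S n) _ _ Hp (Hd _)); reflexivity.
  - assert (Hd : forall d k, k < S n -> scons d rho k = scons d rho' k)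
      by (intros d [|k] Hk; simpl; auto with arith).
    setoid_rewrite (IHp (S n) _ _ Hp (Hd _)); reflexivity.
Qed.

Lemma sentence_holds_iff (M : structure L) p rho rho' :
  sentence p -> holds M rho p <-> holds M rho' p.
Proof. intro Hp; apply (holds_coincide M p 0); auto; intros; lia. Qed.

Lemma models_of_holds (M : structure L) p rho :
  sentence p -> holds M rho p -> models M p.
Proof. intros Hp H rho'; apply (sentence_holds_iff M p rho); auto. Qed.

Definition level (k : qkind) (n : nat) (p : form L) : Prop :=
  match k with KEx => isEx n p | KAll => isAll n p end.

Definition dual (k : qkind) : qkind :=
  match k with KEx => KAll | KAll => KEx end.

Definition quant (k : qkind) : form L -> form L :=
  match k with KEx => @fex L | KAll => @fall L end.

Lemma level_lift k n p : level (dual k) n p -> level k (S n) p.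
Proof. destruct k; constructor; assumption. Qed.

Lemma level_quant k n p : level k (S n) p -> level k (S n) (quant k p).
Proof. destruct k; constructor; assumption. Qed.

Lemma level_qfree k n p : qfree p -> level k n p.
Proof.
  intro Hp; revert k; induction n as [|n IH]; intro k.
  - destruct k; constructor; assumption.
  - apply level_lift, IH.
Qed.

Lemma level_0_qfree k p : level k 0 p -> qfree p.
Proof. destruct k; inversion 1; assumption. Qed.

Lemma level_S_ind k n (P : form L -> Prop) :
  (forall p, level (dual k) n p -> P p) ->
  (forall p, level k (S n) p -> P p -> P (quant k p)) ->
  forall p, level k (S n) p -> P p.
Proof.
  intros Hlow Hquant p Hp; destruct k; simpl in Hp;
    remember (S n) as m eqn:Hm; induction Hp; try discriminate;
    injection Hm as ->;
    solve [apply Hlow; assumption | apply (Hquant _ Hp), IHHp; auto].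
Qed.

Lemma ren_quant k xi p : ren_f xi (quant k p) = quant k (ren_f (up xi) p).
Proof. destruct k; reflexivity. Qed.

Lemma level_ren n : forall k xi p, level k n p -> level k n (ren_f xi p).
Proof.
  induction n as [|n IH]; intros k xi p Hp.
  - apply level_qfree, qfree_ren, (level_0_qfree k), Hp.
  - revert xi; revert p Hp; refine (level_S_ind k n _ _ _).
    + intros p Hp xi; apply level_lift, IH, Hp.
    + intros p Hp IHp xi; rewrite ren_quant; apply level_quant, IHp.
Qed.

Variant connective := Conj | Disj.

Definition bin (c : connective) : form L -> form L -> form L :=
  match c with Conj => @fand L | Disj => @for_ L end.

Lemma holds_quant_congr (M : structure L) rho k p p' :
  (forall rho, holds M rho p <-> holds M rho p') ->
  holds M rho (quant k p) <-> holds M rho (quant k p').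
Proof. intro E; destruct k; simpl; setoid_rewrite E; reflexivity. Qed.

Lemma holds_quant_bin_l (M : structure L) rho k c p q :
  holds M rho (quant k (bin c p (ren_f S q))) <->
  holds M rho (bin c (quant k p) q).
Proof.
  destruct (dom_inh M) as [d0].
  destruct k, c; simpl; setoid_rewrite holds_shift; try firstorder.
  destruct (classic (holds M rho q)); firstorder.
Qed.

Lemma holds_quant_bin_r (M : structure L) rho k c p q :
  holds M rho (quant k (bin c (ren_f S p) q)) <->
  holds M rho (bin c p (quant k q)).
Proof.
  assert (comm : forall M rho (p q : form L),
             holds M rho (bin c p q) <-> holds M rho (bin c q p))
    by (destruct c; simpl; tauto).
  rewrite (holds_quant_congr M rho k _ (bin c q (ren_f S p))),
    holds_quant_bin_l; [apply comm | intro; apply comm].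
Qed.

Definition level_bin_equiv c k n m p q : Prop :=
  exists r, level k n r /\ bound_f m r /\
    forall M rho, holds M rho r <-> holds M rho (bin c p q).

Lemma bound_quant k m p : bound_f m (quant k p) = bound_f (S m) p.
Proof. destruct k; reflexivity. Qed.

Lemma level_bin_equiv_quant c k n m p q p' q' :
  level_bin_equiv c k (S n) (S m) p' q' ->
  (forall M rho, holds M rho (quant k (bin c p' q')) <-> holds M rho (bin c p q)) ->
  level_bin_equiv c k (S n) m p q.
Proof.
  intros [r [Hr [Br Er]]] Epull; exists (quant k r).
  split; [apply level_quant, Hr|]; split; [rewrite bound_quant; exact Br|].
  intros M rho; rewrite <- Epull; apply holds_quant_congr, Er.
Qed.

Lemma level_bin c n : forall k m p q, level k n p -> level k n q ->
  bound_f m p -> bound_f m q -> level_bin_equiv c k n m p q.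
Proof.
  induction n as [|n IH]; intros k.
  - intros m p q Hp Hq Bp Bq; exists (bin c p q); split; [|split].
    + apply level_qfree; destruct c; split; eapply level_0_qfree; eassumption.
    + destruct c; split; assumption.
    + reflexivity.
  - assert (low : forall q, level k (S n) q -> forall m p,
               level (dual k) n p -> bound_f m p -> bound_f m q ->
               level_bin_equiv c k (S n) m p q).
    { refine (level_S_ind k n _ _ _).
      - intros q Hq m p Hp Bp Bq.
        destruct (IH (dual k) m p q Hp Hq Bp Bq) as [r [Hr Er]].
        exists r; split; [apply level_lift, Hr | exact Er].
      - intros q Hq IHq m p Hp Bp Bq; rewrite bound_quant in Bq.
        apply (level_bin_equiv_quant c k n m p (quant k q) (ren_f S p) q);
          [|intros; apply holds_quant_bin_r].
        apply IHq; [apply level_ren, Hp | | exact Bq].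
        apply (bound_ren _ m); auto with arith. }
    intros m p q Hp; revert m q; revert p Hp; refine (level_S_ind k n _ _ _).
    + intros p Hp m q Hq Bp Bq; apply low; assumption.
    + intros p Hp IHp m q Hq Bp Bq; rewrite bound_quant in Bp.
      apply (level_bin_equiv_quant c k n m (quant k p) q p (ren_f S q));
        [|intros; apply holds_quant_bin_l].
      apply IHp; [apply level_ren, Hq | exact Bp |].
      apply (bound_ren _ m); auto with arith.
Qed.

Lemma level_set_bin c k n (p q : form L) : level_set k n p -> level_set k n q ->
  exists r, level_set k n r /\
    forall M rho, holds M rho r <-> holds M rho (bin c p q).
Proof.
  intros [Sp Hp] [Sq Hq].
  destruct (level_bin c n k 0 p q Hp Hq Sp Sq) as [r [Hr [Sr Er]]].
  exists r; split; [split|]; assumption.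
Qed.

Lemma level_set_conj_list k n (l : list (form L)) :
  (forall p, In p l -> level_set k n p) ->
  exists r, level_set k n r /\
    forall M rho, holds M rho r <-> (forall p, In p l -> holds M rho p).
Proof.
  induction l as [|a l IH]; intro Hl.
  - exists (fneg fbot); split; [split; [exact I | apply level_qfree; exact I]|].
    simpl; tauto.
  - destruct IH as [r0 [H0 E0]]; [intros; apply Hl; right; assumption|].
    destruct (level_set_bin Conj k n a r0 (Hl a (or_introl eq_refl)) H0) as [r [Hr Er]].
    exists r; split; [exact Hr|]; intros M rho; rewrite Er; simpl; rewrite E0.
    firstorder congruence.
Qed.

Lemma level_set_disj_list k n (l : list (form L)) :
  (forall p, In p l -> level_set k n p) ->
  exists r, level_set k n r /\
    forall M rho, holds M rho r <-> (exists p, In p l /\ holds M rho p).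
Proof.
  induction l as [|a l IH]; intro Hl.
  - exists fbot; split; [split; [exact I | apply level_qfree; exact I]|].
    simpl; firstorder.
  - destruct IH as [r0 [H0 E0]]; [intros; apply Hl; right; assumption|].
    destruct (level_set_bin Disj k n a r0 (Hl a (or_introl eq_refl)) H0) as [r [Hr Er]].
    exists r; split; [exact Hr|]; intros M rho; rewrite Er; simpl; rewrite E0.
    firstorder congruence.
Qed.

Section Ultraproduct.
Variables (I : Type) (M : I -> structure L).
Variables (U : (I -> Prop) -> Prop) (HU : filter.UltraFilter U).

Lemma U_true : U (fun _ => True).
Proof. apply filter.filterT. Qed.

Lemma U_mono (X Y : I -> Prop) : (forall i, X i -> Y i) -> U X -> U Y.
Proof. apply filter.filterS. Qed.

Lemma U_and (X Y : I -> Prop) : U (fun i => X i /\ Y i) <-> U X /\ U Y.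
Proof.
  split.
  - intro H; split; revert H; apply U_mono; tauto.
  - intros [HX HY]; apply filter.filterI; assumption.
Qed.

Lemma U_not (X : I -> Prop) : U (fun i => ~ X i) <-> ~ U X.
Proof.
  split.
  - intros HnX HX; apply (filter.filter_not_empty U).
    apply (U_mono (fun i => X i /\ ~ X i)); [tauto | apply U_and; auto].
  - destruct (filter.in_ultra_setVsetC X HU); tauto.
Qed.

Lemma U_or (X Y : I -> Prop) : U (fun i => X i \/ Y i) <-> U X \/ U Y.
Proof.
  split.
  - intro H; destruct (classic (U X)) as [|HX]; [left; assumption | right].
    apply U_not in HX.
    apply (U_mono (fun i => (X i \/ Y i) /\ ~ X i)); [tauto | apply U_and; auto].
  - intros [H|H]; revert H; apply U_mono; tauto.
Qed.

Lemma U_imp (X Y : I -> Prop) : U (fun i => X i -> Y i) <-> (U X -> U Y).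
Proof.
  split.
  - intros H HX; apply (U_mono (fun i => (X i -> Y i) /\ X i));
      [tauto | apply U_and; auto].
  - intro H; destruct (classic (U X)) as [HX|HX].
    + apply (U_mono Y); auto.
    + apply U_not in HX; revert HX; apply U_mono; tauto.
Qed.

Lemma U_fin n (X : Fin.t n -> I -> Prop) :
  (forall j, U (X j)) -> U (fun i => forall j, X j i).
Proof.
  induction n as [|n IH]; intro H.
  - apply (U_mono (fun _ => True)); [intros i _ j; inversion j | apply U_true].
  - apply (U_mono (fun i => X Fin.F1 i /\ forall j, X (Fin.FS j) i)).
    + intros i [H1 H2] j; apply (Fin.caseS' j); auto.
    + apply U_and; split; [apply H | apply (IH (fun j => X (Fin.FS j))); auto].
Qed.

Definition dprod := forall i, dom (M i).

Definition U_eq (x y : dprod) : Prop := U (fun i => x i = y i).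

Lemma U_eq_refl x : U_eq x x.
Proof. apply (U_mono (fun _ => True)); auto using U_true. Qed.

Lemma U_eq_sym x y : U_eq x y -> U_eq y x.
Proof. apply U_mono; auto. Qed.

Lemma U_eq_trans x y z : U_eq x y -> U_eq y z -> U_eq x z.
Proof.
  intros Hxy Hyz; apply (U_mono (fun i => x i = y i /\ y i = z i));
    [intros i [-> ->]; reflexivity | apply U_and; auto].
Qed.

Definition canon (x : dprod) : dprod := epsilon (inhabits x) (U_eq x).

Lemma U_eq_canon x : U_eq x (canon x).
Proof. apply (epsilon_spec (inhabits x) (U_eq x)); exists x; apply U_eq_refl. Qed.

Lemma canon_eq x y : U_eq x y -> canon x = canon y.
Proof.
  intro Hxy; unfold canon.
  assert (E : U_eq x = U_eq y).
  { apply functional_extensionality; intro z; apply propositional_extensionality.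
    split; [apply U_eq_trans, U_eq_sym, Hxy | apply U_eq_trans, Hxy]. }
  rewrite E; f_equal; apply proof_irrelevance.
Qed.

Lemma canon_idem x : canon (canon x) = canon x.
Proof. apply canon_eq, U_eq_sym, U_eq_canon. Qed.

(* The quotient of [dprod] by [U_eq], realised as the set of canonical
   representatives. *)
Definition ultra_dom := {x : dprod | canon x = x}.

Definition cls (x : dprod) : ultra_dom := exist _ (canon x) (canon_idem x).

Lemma cls_eq x y : cls x = cls y <-> U_eq x y.
Proof.
  split.
  - intro E; apply (f_equal (@proj1_sig _ _)) in E; simpl in E.
    apply (U_eq_trans _ (canon x)); [apply U_eq_canon|].
    rewrite E; apply U_eq_sym, U_eq_canon.
  - intro Hxy; apply subset_eq_compat, canon_eq, Hxy.
Qed.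

Lemma cls_val (q : ultra_dom) : cls (proj1_sig q) = q.
Proof. destruct q as [x Hx]; apply subset_eq_compat; exact Hx. Qed.

Lemma val_cls x : U_eq (proj1_sig (cls x)) x.
Proof. apply U_eq_sym, U_eq_canon. Qed.

Definition ultraproduct : structure L := {|
  dom := ultra_dom;
  dom_inh := inhabits (cls (fun i => epsilon (dom_inh (M i)) (fun _ => True)));
  interp_f := fun f args => cls (fun i => interp_f (M i) f (fun j => proj1_sig (args j) i));
  interp_r := fun R args => U (fun i => interp_r (M i) R (fun j => proj1_sig (args j) i)) |}.

Definition coord (rho : nat -> ultra_dom) (i : I) : nat -> dom (M i) :=
  fun k => proj1_sig (rho k) i.

Lemma holds_coord_scons p d rho :
  (fun i => holds (M i) (coord (scons d rho) i) p) =
  (fun i => holds (M i) (scons (proj1_sig d i) (coord rho i)) p).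
Proof.
  apply functional_extensionality; intro i; f_equal.
  apply functional_extensionality; intros [|k]; reflexivity.
Qed.

Lemma U_val_cls (F : forall i, dom (M i) -> Prop) x :
  U (fun i => F i (proj1_sig (cls x) i)) <-> U (fun i => F i (x i)).
Proof.
  pose proof (val_cls x) as E; unfold U_eq in E.
  split; intro H; generalize (conj H E); rewrite <- U_and;
    apply U_mono; intros i [Hi Ei]; congruence.
Qed.

Lemma los_args n (ts : Fin.t n -> term L) rho :
  (forall j, eval_t ultraproduct rho (ts j) =
             cls (fun i => eval_t (M i) (coord rho i) (ts j))) ->
  U (fun i => (fun j => proj1_sig (eval_t ultraproduct rho (ts j)) i) =
              (fun j => eval_t (M i) (coord rho i) (ts j))).
Proof.
  intro Hts.
  apply (U_mono (fun i => forall j, proj1_sig (eval_t ultraproduct rho (ts j)) i =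
                                    eval_t (M i) (coord rho i) (ts j))).
  - intros i Hi; apply functional_extensionality, Hi.
  - apply U_fin; intro j; rewrite Hts; apply val_cls.
Qed.

Lemma los_term t rho :
  eval_t ultraproduct rho t = cls (fun i => eval_t (M i) (coord rho i) t).
Proof.
  induction t as [k | f v IH]; simpl.
  - symmetry; apply cls_val.
  - apply cls_eq; generalize (los_args _ v rho IH); apply U_mono.
    intros i ->; reflexivity.
Qed.

Lemma choice_witness (P : forall i, dom (M i) -> Prop) :
  exists x : dprod, forall i, (exists e, P i e) -> P i (x i).
Proof.
  exists (fun i => epsilon (dom_inh (M i)) (P i)); intro i.
  apply epsilon_spec.
Qed.

Theorem los p : forall rho,
  holds ultraproduct rho p <-> U (fun i => holds (M i) (coord rho i) p).
Proof.
  induction p; intro rho; simpl.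
  - split; [tauto | apply (filter.filter_not_empty U)].
  - rewrite !los_term; apply cls_eq.
  - pose proof (los_args _ t rho (fun j => los_term (t j) rho)) as E.
    split; intro H; generalize (conj H E); rewrite <- U_and; apply U_mono;
      intros i [Hi Ei]; rewrite Ei in *; exact Hi.
  - rewrite IHp, U_not; reflexivity.
  - rewrite IHp1, IHp2, U_and; reflexivity.
  - rewrite IHp1, IHp2, U_or; reflexivity.
  - rewrite IHp1, IHp2, U_imp; reflexivity.
  - setoid_rewrite IHp; setoid_rewrite holds_coord_scons; split.
    + intro H; apply NNPP; intro Hn; apply U_not in Hn.
      destruct (choice_witness (fun i e => ~ holds (M i) (scons e (coord rho i)) p))
        as [x Hx].
      apply (filter.filter_not_empty U).
      assert (Hcls := proj1 (U_val_cls (fun i e => holds (M i) (scons e (coord rho i)) p) x)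
                      (H (cls x))).
      generalize (conj Hn Hcls); rewrite <- U_and.
      apply U_mono; intros i [Hni Hxi]; apply (Hx i); auto.
      apply not_all_ex_not, Hni.
    + intros H d; revert H; apply U_mono; auto.
  - setoid_rewrite IHp; setoid_rewrite holds_coord_scons; split.
    + intros [d H]; revert H; apply U_mono; eauto.
    + intro H.
      destruct (choice_witness (fun i e => holds (M i) (scons e (coord rho i)) p))
        as [x Hx].
      exists (cls x); apply (U_val_cls (fun i e => holds (M i) (scons e (coord rho i)) p)).
      revert H; apply U_mono; auto.
Qed.

End Ultraproduct.

Arguments ultraproduct {I} M {U} HU.
Arguments los {I M U} HU p rho.
Arguments U_mono {I U} HU X Y.

Theorem compactness (G : fset L) :
  (forall l, (forall p, In p l -> G p) ->
     exists M : structure L, forall p, In p l -> models M p) ->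
  consistent G.
Proof.
  intro Hfin.
  pose (parts := {l : list (form L) | forall p, In p l -> G p}).
  pose (model := fun i : parts =>
          proj1_sig (constructive_indefinite_description _ (Hfin _ (proj2_sig i)))).
  assert (Hmodel : forall (i : parts) p, In p (proj1_sig i) -> models (model i) p)
    by (intro i; unfold model;
        destruct (constructive_indefinite_description _ _) as [N HN]; exact HN).
  pose (F := fun X : parts -> Prop =>
          exists l0 : parts, forall i : parts, incl (proj1_sig l0) (proj1_sig i) -> X i).
  assert (HF : filter.ProperFilter F).
  { split; [|split].
    - intros [l0 Hl0]; exact (Hl0 l0 (incl_refl _)).
    - exists (exist (fun l => forall p, In p l -> G p) nil (fun p H => match H with end)).
      intros; constructor.
    - intros X Y [[l1 H1] HX] [[l2 H2] HY].
      assert (H12 : forall p, In p (l1 ++ l2) -> G p)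
        by (intros p Hp; apply in_app_or in Hp; destruct Hp; auto).
      exists (exist _ (l1 ++ l2) H12); intros i Hi.
      apply incl_app_inv in Hi; split; [apply HX | apply HY]; apply Hi.
    - intros X Y HXY [l0 HX]; exists l0; intros i Hi; apply HXY, HX, Hi. }
  destruct (filter.ultraFilterLemma HF) as [U [HU HFU]].
  exists (ultraproduct model HU); intros p Gp rho.
  apply (los HU).
  apply (U_mono HU (fun i => In p (proj1_sig i))); [intros i Hi; apply Hmodel, Hi|].
  assert (Hp : forall q, In q (p :: nil) -> G q) by (intros q [<-|[]]; exact Gp).
  apply HFU; exists (exist _ (p :: nil) Hp).
  intros i Hi; apply Hi; left; reflexivity.
Qed.

Lemma inconsistent_finite_part (G D : fset L) :
  ~ consistent (funion G D) ->
  exists l, (forall p, In p l -> D p) /\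
            ~ consistent (funion G (fun p => In p l)).
Proof.
  intro Hinc; apply NNPP; intro Hno; apply Hinc, compactness.
  intros l Hl.
  destruct (list_union_cover G D l Hl) as [ld [Hld Hcov]].
  assert (Hcons : consistent (funion G (fun p => In p ld)))
    by (apply NNPP; intro Hn; apply Hno; exists ld; split; assumption).
  destruct Hcons as [M HM]; exists M; intros p Hp.
  apply HM; destruct (Hcov p Hp); [left | right]; assumption.
Qed.

Definition theory_of (M : structure L) : fset L :=
  fun p => sentence p /\ models M p.

Lemma theory_of_complete_consistent (M : structure L) :
  complete_consistent_theory (theory_of M).
Proof.
  split; [|split; [|split]].
  - intros p [Hp _]; exact Hp.
  - intros p Hp HM; split; [exact Hp|]; apply HM; intros q [_ Hq]; exact Hq.
  - intros p Hp; destruct (classic (models M p)) as [H | H]; [left | right];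
      intros N HN; apply HN; split; try assumption.
    intros rho Hp'; exact (H (models_of_holds M p rho Hp Hp')).
  - exists M; intros p [_ H]; exact H.
Qed.

Variables (k : qkind) (n : nat).

Lemma consistent_level_falsified (G : fset L) (M : structure L) :
  models_set M (Th (level_set k n) G) ->
  consistent (funion G (fun q => exists lam,
                 level_set k n lam /\ ~ models M lam /\ q = fneg lam)).
Proof.
  intro HM; apply NNPP; intro Hinc.
  destruct (inconsistent_finite_part _ _ Hinc) as [l [Hl Hinc_l]].
  destruct (map_preimage (@fneg L) (fun lam => level_set k n lam /\ ~ models M lam) l)
    as [ls [Hls ->]];
    [intros q Hq; destruct (Hl q Hq) as [lam [H1 [H2 ->]]]; eauto|].
  destruct (level_set_disj_list k n ls) as [sigma [Hsigma Esigma]];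
    [intros; apply Hls; assumption|].
  assert (Gsigma : entails G sigma).
  { intros N HN rho; apply NNPP; intro Hn; apply Hinc_l; exists N.
    intros p [Gp | Hp]; [apply HN, Gp|].
    apply in_map_iff in Hp; destruct Hp as [lam [<- Hlam]].
    intros rho' Hlam'; apply Hn, Esigma; exists lam; split; [assumption|].
    apply (sentence_holds_iff N lam rho'); [apply Hls, Hlam | exact Hlam']. }
  destruct (dom_inh M) as [d].
  destruct (proj1 (Esigma M (fun _ => d))
              (HM sigma (conj Hsigma (conj (proj1 Hsigma) Gsigma)) (fun _ => d)))
    as [lam [Hlam Hholds]].
  destruct (Hls lam Hlam) as [[Slam _] Hnot].
  exact (Hnot (models_of_holds M lam _ Slam Hholds)).
Qed.

Lemma model_level_below (G : fset L) (M : structure L) :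
  models_set M (Th (level_set k n) G) ->
  exists N, models_set N G /\
    forall lam, level_set k n lam -> models N lam -> models M lam.
Proof.
  intro HM; destruct (consistent_level_falsified G M HM) as [N HN].
  exists N; split; [intros p Gp; apply HN; left; exact Gp|].
  intros lam Hlam HNlam; apply NNPP; intro Hnot.
  destruct (dom_inh N) as [d].
  apply (HN (fneg lam) (or_intror (ex_intro _ lam (conj Hlam (conj Hnot eq_refl))))
           (fun _ => d)), HNlam.
Qed.

Variables (A : fset L) (phi : form L).
Hypotheses (hA : is_theory A) (hphi : sentence phi).

Lemma level_theory_consistent :
  (forall psi, neg_set (level_set k n) psi -> ~ entails A (fiff phi psi)) ->
  consistent (funion (funion A (fsingle phi))
                (Th (level_set k n) (funion A (fsingle (fneg phi))))).
Proof.
  intro hyp; apply NNPP; intro Hinc.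
  destruct (inconsistent_finite_part _ _ Hinc) as [l [Hl Hinc_l]].
  destruct (level_set_conj_list k n l) as [sigma [Hsigma Esigma]];
    [intros p Hp; apply Hl, Hp|].
  apply (hyp (fneg sigma)).
  - split; [exact (proj1 Hsigma)|]; exists sigma; split; [exact Hsigma|].
    intros N _ rho; simpl; tauto.
  - intros N HN rho; simpl; split.
    + intros Hphi Hsigma_rho; apply Hinc_l; exists N.
      intros p [[Ap | ->] | Hp].
      * apply HN, Ap.
      * exact (models_of_holds N phi rho hphi Hphi).
      * apply (models_of_holds N p rho); [apply Hl, Hp|].
        exact (proj1 (Esigma N rho) Hsigma_rho p Hp).
    + intro Hnsigma; apply NNPP; intro Hnphi; apply Hnsigma, Esigma.
      intros p Hp; destruct (Hl p Hp) as [_ [_ Ep]]; apply Ep.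
      intros q [Aq | ->]; [apply HN, Aq|].
      exact (models_of_holds N (fneg phi) rho hphi Hnphi).
Qed.

Lemma complete_pair_of_model (T : fset L) (hT : is_theory T) (M : structure L) :
  models_set M (funion T (funion (funion A (fsingle phi))
                  (Th (level_set k n) (funion A (fsingle (fneg phi)))))) ->
  exists Tp Tm : fset L,
    complete_consistent_theory Tp /\ complete_consistent_theory Tm /\
    fsubset (funion A (fsingle phi)) Tp /\
    fsubset (funion A (fsingle (fneg phi))) Tm /\
    fsubset (finter (level_set k n) Tm) (finter (level_set k n) Tp) /\
    fsubset T Tp.
Proof.
  intro HM.
  destruct (model_level_below (funion A (fsingle (fneg phi))) M) as [N [HN Hbelow]];
    [intros p Hp; apply HM; right; right; exact Hp|].
  exists (theory_of M), (theory_of N).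
  split; [apply theory_of_complete_consistent|].
  split; [apply theory_of_complete_consistent|].
  assert (Hsent : forall psi, sentence psi -> is_theory (funion A (fsingle psi)))
    by (intros psi Hpsi p [Ap | ->]; auto).
  split; [intros p Hp; split; [apply (Hsent phi hphi), Hp|];
          apply HM; right; left; exact Hp|].
  split; [intros p Hp; split; [apply (Hsent (fneg phi) hphi), Hp | apply HN, Hp]|].
  split; [intros lam [Hlam [_ HNlam]]; repeat split; auto; apply Hlam|].
  intros p Tp; split; [apply hT, Tp | apply HM; left; exact Tp].
Qed.

End FirstOrder.

Arguments complete_pair_of_model {L} k n {A phi} hA hphi T hT M.
Arguments level_theory_consistent {L k n A phi} hphi.

Theorem lemma4p5 (L : language) (k : qkind) (n : nat)
  (A : fset L) (phi : form L)
  (hA : is_theory A) (hphi : sentence phi)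
  (hyp : forall psi, neg_set (level_set k n) psi ->
           ~ entails A (fiff phi psi)) :
  (exists Tp Tm : fset L,
      complete_consistent_theory Tp /\ complete_consistent_theory Tm /\
      fsubset (funion A (fsingle phi)) Tp /\
      fsubset (funion A (fsingle (fneg phi))) Tm /\
      fsubset (finter (level_set k n) Tm) (finter (level_set k n) Tp))
  /\
  (forall T : fset L, is_theory T ->
     consistent (funion T (funion (funion A (fsingle phi))
                   (Th (level_set k n) (funion A (fsingle (fneg phi)))))) ->
     exists Tp Tm : fset L,
      complete_consistent_theory Tp /\ complete_consistent_theory Tm /\
      fsubset (funion A (fsingle phi)) Tp /\
      fsubset (funion A (fsingle (fneg phi))) Tm /\
      fsubset (finter (level_set k n) Tm) (finter (level_set k n) Tp) /\
      fsubset T Tp).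
Proof.
  split.
  - destruct (level_theory_consistent hphi hyp) as [M HM].
    destruct (complete_pair_of_model k n hA hphi (fun _ => False)
                (fun _ H => False_ind _ H) M) as [Tp [Tm H]];
      [intros p [[] | Hp]; apply HM, Hp|].
    exists Tp, Tm; tauto.
  - intros T hT [M HM]; exact (complete_pair_of_model k n hA hphi T hT M HM).
Qed.
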